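(* Let $\sigma$ be a finite Borel measure on $(-\pi,\pi)$ with $\sigma\perp\lambda$, and let $\sigma^\#=\sigma((-\pi,\pi))\,\delta_0$ be its symmetrization. Then $u_\sigma^\star(t)\le u_{\sigma^\#}^\star(t)$ for all $t\in[0,2\pi]$.
   Context: $\lambda$ is Lebesgue measure; $\delta_0$ the unit Dirac mass at $0$. $G(x,y)=-\frac{xy}{2\pi}-\frac12|x-y|+\frac{\pi}{2}$ on $[-\pi,\pi]^2$, $u_\mu(x)=\int G(x,y)\,d\mu(y)$. For $g\in L^1[-\pi,\pi]$, the star function is $g^\star(t)=\sup\{\int_E g\,d\lambda: E\subset[-\pi,\pi]\text{ Borel},\ \lambda(E)=t\}$ for $t\in[0,2\pi]$. *)

From HB Require Import structures.
From mathcomp Require Import all_boot all_order all_algebra.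
From mathcomp Require Import all_classical all_reals all_analysis.
Set Implicit Arguments. Unset Strict Implicit. Unset Printing Implicit Defensive.
Import Order.TTheory GRing.Theory Num.Theory.
Local Open Scope classical_set_scope.
Local Open Scope ring_scope.

Definition G {R : realType} (x y : R) : R :=
  - (x * y) / (2 * pi) - `|x - y| / 2 + pi / 2.

Definition upot {R : realType}
  (mu : {measure set (measurableTypeR R) -> \bar R}) (x : R) : \bar R :=
  (\int[mu]_(y in `](- pi)%R, (pi : R)[) (G x y)%:E)%E.

Definition star {R : realType} (g : R -> \bar R) (t : R) : \bar R :=
  ereal_sup [set (\int[@lebesgue_measure R]_(x in E) g x)%E
            | E in [set E : set (measurableTypeR R) |
                     [/\ measurable E, E `<=` `[(- pi)%R, (pi : R)] &
                         @lebesgue_measure R E = t%:E]]].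

Definition singular_lebesgue {R : realType}
  (mu : {measure set (measurableTypeR R) -> \bar R}) : Prop :=
  exists N : set (measurableTypeR R),
    [/\ measurable N, @lebesgue_measure R N = 0%E & mu (~` N) = 0%E].

From HB Require Import structures.
From mathcomp Require Import all_boot all_order all_algebra.
From mathcomp Require Import all_classical all_reals all_analysis.
From mathcomp Require Import ring lra measurable_realfun.

Set Implicit Arguments.
Unset Strict Implicit.
Unset Printing Implicit Defensive.

Import Order.TTheory GRing.Theory Num.Theory numFieldNormedType.Exports.
Local Open Scope classical_set_scope.
Local Open Scope ring_scope.

(* For a fixed pole y, x |-> G x y is a nonnegative tent on [-pi, pi] with apex
   Gpeak y <= pi/2 at x = y.  Cutting it at the level c = pi/2 - t/4 bounds its
   integral over any set of measure t by c t plus the area of the tent above c,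
   and this is at most tent_integral t = t pi/2 - t^2/8, the integral of G(., 0)
   over [-t/2, t/2].  By Tonelli, the integral of u_sigma over any admissible set
   is therefore at most sigma((-pi,pi)) tent_integral t, and u_sigma# attains
   this value on [-t/2, t/2]. *)

Section green_function.
Context {R : realType}.
Implicit Types x y c t : R.

Definition Gpeak y : R := (pi + y) * (pi - y) / (2 * pi).

Definition tent_integral t : R := t * pi / 2 - t ^+ 2 / 8.

Lemma G_leE x y : x <= y -> G x y = (pi + x) * (pi - y) / (2 * pi).
Proof.
move=> xy; rewrite /G ler0_norm ?subr_le0 //.
(* pi is generalized because field would otherwise unfold its definition. *)
move: (pi : R) (pi_gt0 R) => p p0; have ? : p != 0 by rewrite gt_eqF.
by field.
Qed.

Lemma G_geE x y : y <= x -> G x y = (pi - x) * (pi + y) / (2 * pi).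
Proof.
move=> yx; rewrite /G ger0_norm ?subr_ge0 //.
move: (pi : R) (pi_gt0 R) => p p0; have ? : p != 0 by rewrite gt_eqF.
by field.
Qed.

Lemma G_diag y : G y y = Gpeak y.
Proof. by rewrite G_leE. Qed.

Lemma G_ge0 x y : - pi <= x <= pi -> - pi <= y <= pi -> 0 <= G x y.
Proof.
move=> /andP[x1 x2] /andP[y1 y2]; have p2 : 0 < 2 * pi :> R by rewrite mulr_gt0 ?pi_gt0.
have [xy|/ltW yx] := lerP x y; [rewrite G_leE // | rewrite G_geE //];
  by apply: divr_ge0; [apply: mulr_ge0; lra | exact: ltW].
Qed.

Lemma G_le_peak x y : - pi <= y <= pi -> G x y <= Gpeak y.
Proof.
move=> /andP[y1 y2]; have p2 : 0 < 2 * pi :> R by rewrite mulr_gt0 ?pi_gt0.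
have [xy|/ltW yx] := lerP x y; [rewrite G_leE // | rewrite G_geE //];
  by rewrite ler_pM2r ?invr_gt0 //; nra.
Qed.

Lemma Gpeak_le y : Gpeak y <= pi / 2.
Proof.
have p2 : 0 < 2 * pi :> R by rewrite mulr_gt0 ?pi_gt0.
by rewrite /Gpeak ler_pdivrMr //; nra.
Qed.

Lemma G_le_affine x y c : x <= y ->
  G x y - c = (pi - y) / (2 * pi) * x + ((pi - y) / 2 - c).
Proof.
move=> xy; rewrite G_leE //.
move: (pi : R) (pi_gt0 R) => p p0; have ? : p != 0 by rewrite gt_eqF.
by field.
Qed.

Lemma G_ge_affine x y c : y <= x ->
  G x y - c = - (pi + y) / (2 * pi) * x + ((pi + y) / 2 - c).
Proof.
move=> yx; rewrite G_geE //.
move: (pi : R) (pi_gt0 R) => p p0; have ? : p != 0 by rewrite gt_eqF.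
by field.
Qed.

Lemma G_homo_left x1 x2 y : y <= pi -> x1 <= x2 -> x2 <= y -> G x1 y <= G x2 y.
Proof.
move=> y2 x12 x2y; have p2 : 0 < 2 * pi :> R by rewrite mulr_gt0 ?pi_gt0.
rewrite !G_leE ?(le_trans x12) // ler_pM2r ?invr_gt0 //; nra.
Qed.

Lemma G_homo_right x1 x2 y : - pi <= y -> y <= x1 -> x1 <= x2 -> G x2 y <= G x1 y.
Proof.
move=> y1 yx1 x12; have p2 : 0 < 2 * pi :> R by rewrite mulr_gt0 ?pi_gt0.
rewrite !G_geE ?(le_trans yx1) // ler_pM2r ?invr_gt0 //; nra.
Qed.

Lemma measurable_fun_G d (T : measurableType d) (f g : T -> R) :
  measurable_fun setT f -> measurable_fun setT g ->
  measurable_fun setT (fun z => G (f z) (g z)).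
Proof.
move=> mf mg; apply: measurable_funD; last exact: measurable_cst.
apply: measurable_funB; (apply: measurable_funM; last exact: measurable_cst).
- by apply: measurable_funN; exact: measurable_funM.
- by apply: measurableT_comp; [exact: normr_measurable | exact: measurable_funB].
Qed.

Lemma measurable_G_left y : measurable_fun setT (G ^~ y).
Proof. by apply: measurable_fun_G; [exact: measurable_id | exact: measurable_cst]. Qed.

End green_function.

Section interval_integrals.
Context {R : realType}.
Notation mu := (@lebesgue_measure R).

Let affine_primitive (al be z : R) : R := (al / 2) *: (z ^+ 2) + be *: z.

Let is_derive_affine_primitive (al be x : R) :
  is_derive x 1 (affine_primitive al be) (al * x + be).
Proof. by apply: is_derive_eq; rewrite /GRing.scale /= !mulr1; field. Qed.

Let continuous_affine_primitive (al be : R) : continuous (affine_primitive al be).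
Proof.
move=> x; apply/differentiable_continuous/derivable1_diffP.
by have ? := is_derive_affine_primitive al be x; exact: ex_derive.
Qed.

Lemma integral_affine (a b al be : R) : a <= b ->
  (\int[mu]_(x in `[a, b]) (al * x + be)%:E =
   ((b - a) * ((al * a + be) + (al * b + be)) / 2)%:E)%E.
Proof.
rewrite le_eqVlt => /predU1P[<-|ab].
  by rewrite set_itv1 integral_set1 subrr !mul0r.
have affine_cont : continuous (fun z : R => al * z + be).
  move=> x; apply: cvgD; last exact: cvg_cst.
  by apply: cvgM; [exact: cvg_cst | exact: cvg_id].
rewrite (@continuous_FTC2 _ _ (affine_primitive al be)) //.
- by rewrite -EFinB /affine_primitive /GRing.scale /=; congr (_%:E); field.
- exact/continuous_subspaceT.
- split.
  + by move=> x _; have ? := is_derive_affine_primitive al be x; exact: ex_derive.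
  + by apply: cvg_at_right_filter; exact: continuous_affine_primitive.
  + by apply: cvg_at_left_filter; exact: continuous_affine_primitive.
- move=> x _; have ? := is_derive_affine_primitive al be x.
  by rewrite derive1E derive_val.
Qed.

Lemma integral_itv_trapezoid (a b al be : R) (f : R -> R) : a <= b ->
  (forall x, a <= x <= b -> f x = al * x + be) ->
  (\int[mu]_(x in `[a, b]) (f x)%:E = ((b - a) * (f a + f b) / 2)%:E)%E.
Proof.
move=> ab fE; rewrite !fE ?lexx ?ab // -integral_affine //.
by apply: eq_integral => x; rewrite inE /= in_itv /= => /fE ->.
Qed.

Lemma ge0_integral_itv_split (a m b : R) (f : R -> \bar R) : a <= m -> m <= b ->
  measurable_fun `[a, b] f -> (forall x, a <= x <= b -> (0 <= f x)%E) ->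
  (\int[mu]_(x in `[a, b]) f x =
   \int[mu]_(x in `[a, m]) f x + \int[mu]_(x in `[m, b]) f x)%E.
Proof.
move=> am mb mf f0.
have abE : `[a, b]%classic = `[a, m] `|` `]m, b] :> set R.
  by apply: itv_bndbnd_setU; rewrite bnd_simp.
rewrite abE ge0_integral_setU //; first last.
- rewrite disj_set2E; apply/eqP/seteqP; split => // x [] /=.
  by rewrite !in_itv /= => /andP[_ xm] /andP[mx _]; lra.
- by move=> x; rewrite -abE /= in_itv /= => /f0.
- by rewrite -abE.
congr (_ + _)%E; apply: integral_itv_obnd_cbnd.
by apply: measurable_funS mf => //; rewrite abE; exact: subsetUr.
Qed.

End interval_integrals.

Lemma ge0_integral_le_level d (T : measurableType d) (R : realType)
    (nu : {measure set T -> \bar R}) (E A : set T) (f : T -> R) (c : R) :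
  measurable E -> measurable A -> measurable_fun setT f -> 0 <= c ->
  (forall x, E x -> 0 <= f x) ->
  (forall x, ~ A x -> f x <= c) -> (forall x, A x -> c <= f x) ->
  (\int[nu]_(x in E) (f x)%:E <= c%:E * nu E + \int[nu]_(x in A) (f x - c)%:E)%E.
Proof.
move=> mE mA mf c0 f0 f_le f_ge.
pose excess x := \1_A x * (f x - c).
have excess0 x : 0 <= excess x.
  rewrite /excess indicE; case: (boolP (x \in A)) => [/set_mem/f_ge|_].
    by rewrite mul1r subr_ge0.
  by rewrite mul0r.
have m_excess : measurable_fun setT excess.
  by apply: measurable_funM; [exact: measurable_indic | exact: measurable_funB].
have f_le_level x : f x <= c + excess x.
  rewrite /excess indicE; case: (boolP (x \in A)) => [_|/negP xA].
    by rewrite mul1r addrC subrK.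
  by rewrite mul0r addr0; apply: f_le => /mem_set.
apply: (@le_trans _ _ (\int[nu]_(x in E) (c%:E + (excess x)%:E))%E).
  apply: ge0_le_integral => //.
  - exact/measurable_EFinP/(measurable_funS measurableT).
  - by apply/measurable_EFinP/(measurable_funS measurableT) => //; exact: measurable_funD.
  - by move=> x _; rewrite -EFinD lee_fin.
rewrite ge0_integralD //; last 2 first.
- by move=> x _; rewrite lee_fin.
- exact/measurable_EFinP/(measurable_funS measurableT).
rewrite integral_cst //; apply: leeD2l.
have -> : (\int[nu]_(x in E) (excess x)%:E = \int[nu]_(x in E `&` A) (f x - c)%:E)%E.
  rewrite integral_mkcondr; apply: eq_integral => x _.
  by rewrite /patch /excess indicE; case: (x \in A); rewrite ?mul1r ?mul0r.
apply: ge0_subset_integral => //; first exact: measurableI.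
- by apply/measurable_EFinP/(measurable_funS measurableT) => //; exact: measurable_funB.
- by move=> x /f_ge; rewrite lee_fin subr_ge0.
Qed.

Section G_level_set.
Context {R : realType}.
Notation mu := (@lebesgue_measure R).
Variables (y c : R).
Hypotheses (y_gt : - pi < y) (y_lt : y < pi) (c_le : c <= Gpeak y).

Definition level_left : R := - pi + 2 * pi * c / (pi - y).
Definition level_right : R := pi - 2 * pi * c / (pi + y).

Let pi0 : 0 < pi :> R := pi_gt0 R.
Let pi_addy_gt0 : 0 < pi + y. Proof. by have := y_gt; lra. Qed.
Let pi_suby_gt0 : 0 < pi - y. Proof. by have := y_lt; lra. Qed.
Let c_le' : c * (2 * pi) <= (pi + y) * (pi - y).
Proof. by move: c_le; rewrite /Gpeak ler_pdivlMr ?mulr_gt0. Qed.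

Lemma level_left_le : level_left <= y.
Proof.
rewrite /level_left -lerBrDl opprK ler_pdivrMr //.
by have := c_le'; have := pi_suby_gt0; nra.
Qed.

Lemma level_right_ge : y <= level_right.
Proof.
rewrite /level_right lerBrDr -lerBrDl ler_pdivrMr //.
by have := c_le'; have := pi_addy_gt0; nra.
Qed.

Lemma G_level_left : G level_left y = c.
Proof.
rewrite G_leE ?level_left_le // /level_left.
move: (pi : R) pi0 pi_suby_gt0 => P P0 Py.
have ? : P != 0 by rewrite gt_eqF.
have ? : P - y != 0 by rewrite gt_eqF.
by field; apply/andP.
Qed.

Lemma G_level_right : G level_right y = c.
Proof.
rewrite G_geE ?level_right_ge // /level_right.
move: (pi : R) pi0 pi_addy_gt0 => P P0 Py.
have ? : P != 0 by rewrite gt_eqF.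
have ? : P + y != 0 by rewrite gt_eqF.
by field; apply/andP.
Qed.

Lemma G_le_level x : ~ `[level_left, level_right]%classic x -> G x y <= c.
Proof.
rewrite /= in_itv /= => x_out.
have [x_lt|le_x] := ltP x level_left.
  rewrite -G_level_left; apply: G_homo_left; [exact: ltW | exact: ltW |].
  exact: level_left_le.
have [r_lt|x_le] := ltP level_right x; last by case: x_out; rewrite le_x x_le.
rewrite -G_level_right; apply: G_homo_right; last exact: ltW.
  exact: ltW.
exact: level_right_ge.
Qed.

Lemma G_ge_level x : `[level_left, level_right]%classic x -> c <= G x y.
Proof.
rewrite /= in_itv /= => /andP[l_le le_r]; have [xy|/ltW yx] := lerP x y.
  by rewrite -{1}G_level_left; apply: G_homo_left => //; exact: ltW.
by rewrite -{1}G_level_right; apply: G_homo_right => //; exact: ltW.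
Qed.

Lemma integral_G_excess :
  (\int[mu]_(x in `[level_left, level_right]) (G x y - c)%:E =
   (pi * (Gpeak y - c) ^+ 2 / Gpeak y)%:E)%E.
Proof.
have m_excess : measurable_fun setT (fun x => (G x y - c)%:E).
  apply/measurable_EFinP/measurable_funB; first exact: measurable_G_left.
  exact: measurable_cst.
rewrite (@ge0_integral_itv_split _ _ y); first last.
- by move=> x /G_ge_level; rewrite lee_fin subr_ge0.
- exact: measurable_funS m_excess.
- exact: level_right_ge.
- exact: level_left_le.
rewrite (@integral_itv_trapezoid _ _ _ ((pi - y) / (2 * pi)) ((pi - y) / 2 - c));
  last 2 first.
- exact: level_left_le.
- by move=> x /andP[_]; exact: G_le_affine.
rewrite (@integral_itv_trapezoid _ _ _ (- (pi + y) / (2 * pi)) ((pi + y) / 2 - c));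
  last 2 first.
- exact: level_right_ge.
- by move=> x /andP[+ _]; exact: G_ge_affine.
rewrite -EFinD G_level_left G_level_right G_diag subrr add0r addr0; congr (_%:E).
rewrite /level_left /level_right /Gpeak.
move: (pi : R) pi0 pi_addy_gt0 pi_suby_gt0 => P P0 Pyp Pym.
have ? : P != 0 by rewrite gt_eqF.
have ? : P + y != 0 by rewrite gt_eqF.
have ? : P - y != 0 by rewrite gt_eqF.
by field; apply/and3P.
Qed.

End G_level_set.

Section tent_bound.
Context {R : realType}.
Notation mu := (@lebesgue_measure R).

Lemma tent_integral_ge0 (t : R) : 0 <= t <= 2 * pi -> 0 <= tent_integral t.
Proof. by move=> /andP[t0 t_le]; rewrite /tent_integral; nra. Qed.

Lemma level_le_tent (t : R) : 0 <= t -> (pi / 2 - t / 4) * t <= tent_integral t.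
Proof. by move=> t0; rewrite /tent_integral; nra. Qed.

Lemma level_excess_le_tent (t h : R) : t <= 2 * pi ->
  pi / 2 - t / 4 < h -> h <= pi / 2 ->
  (pi / 2 - t / 4) * t + pi * (h - (pi / 2 - t / 4)) ^+ 2 / h <= tent_integral t.
Proof.
set c := pi / 2 - t / 4 => t_le c_lt h_le.
have c0 : 0 <= c by rewrite /c; lra.
have h0 : 0 < h by apply: le_lt_trans c_lt.
have tE : t = 2 * pi - 4 * c by rewrite /c; lra.
suff : pi * (h - c) ^+ 2 / h <= t ^+ 2 / 8.
  by rewrite /tent_integral tE; lra.
rewrite ler_pdivrMr //.
have c2_le : c ^+ 2 <= h * (pi / 2).
  have : c ^+ 2 <= h ^+ 2 by rewrite ler_pXn2r // ?nnegrE; lra.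
  have : h ^+ 2 <= h * (pi / 2) by rewrite expr2 ler_pM2l.
  lra.
have : 0 <= (pi / 2 - h) * (h * (pi / 2) - c ^+ 2) by apply: mulr_ge0; lra.
rewrite tE; nra.
Qed.

Lemma integral_G_le_tent (y t : R) (E : set R) : - pi < y < pi -> 0 <= t <= 2 * pi ->
  measurable E -> E `<=` `[- pi, pi] -> mu E = t%:E ->
  (\int[mu]_(x in E) (G x y)%:E <= (tent_integral t)%:E)%E.
Proof.
move=> /andP[y_gt y_lt] /andP[t0 t_le] mE E_sub muE.
have pi0 := pi_gt0 R.
set c := pi / 2 - t / 4; have c0 : 0 <= c by rewrite /c; lra.
have G0 x : E x -> 0 <= G x y.
  move=> /E_sub; rewrite /= in_itv /= => xJ.
  by apply: G_ge0 => //; apply/andP; split; exact: ltW.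
have mG := measurable_G_left y.
have [peak_le|c_lt] := lerP (Gpeak y) c.
  have G_le x : ~ set0 x -> G x y <= c.
    by move=> _; apply: le_trans peak_le; apply: G_le_peak; apply/andP; split; exact: ltW.
  apply: le_trans (ge0_integral_le_level mu mE measurable0 mG c0 G0 G_le _) _ => //.
  rewrite integral_set0 adde0 (_ : _ * _ = (c * t)%:E)%E ?lee_fin ?level_le_tent //.
  by rewrite EFinM -muE.
have c_le := ltW c_lt.
apply: le_trans (ge0_integral_le_level mu mE
  (measurable_itv `[level_left y c, level_right y c]) mG c0 G0 _ _) _.
- exact: G_le_level.
- exact: G_ge_level.
rewrite integral_G_excess // (_ : _ * _ = (c * t)%:E)%E; last by rewrite EFinM -muE.
by rewrite -EFinD lee_fin level_excess_le_tent ?Gpeak_le.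
Qed.

End tent_bound.

Section potential_integrals.
Context {R : realType}.
Notation mu := (@lebesgue_measure R).
Local Notation I := (`](- pi)%R, (pi : R)[%classic : set (measurableTypeR R)).

Lemma integral_upot_le_tent (sigma : {measure set (measurableTypeR R) -> \bar R})
    (t : R) (E : set R) :
  (sigma I < +oo)%E -> 0 <= t <= 2 * pi -> measurable E ->
  E `<=` `[- pi, pi] -> mu E = t%:E ->
  (\int[mu]_(x in E) upot sigma x <= sigma I * (tent_integral t)%:E)%E.
Proof.
move=> sigmaI_fin t_itv mE E_sub muE.
have mI : measurable I by exact: measurable_itv.
pose sigmaI : {measure set (measurableTypeR R) -> \bar R} := mfrestr mI sigmaI_fin.
have sigmaIE A : measurable A -> A `<=` I -> sigma A = sigmaI A.
  by move=> mA AI; apply: (congr1 sigma); apply/esym/setIidl.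
pose F (z : measurableTypeR R * measurableTypeR R) :=
  ((\1_E z.1 : R) * ((\1_I z.2 : R) * G z.1 z.2))%:E.
have mF : measurable_fun setT F.
  apply/measurable_EFinP; apply: measurable_funM.
    by apply: measurableT_comp; [exact: measurable_indic | exact: measurable_fst].
  apply: measurable_funM.
    by apply: measurableT_comp; [exact: measurable_indic | exact: measurable_snd].
  by apply: measurable_fun_G; [exact: measurable_fst | exact: measurable_snd].
have F0 z : (0 <= F z)%E.
  rewrite /F lee_fin !indicE.
  case: (boolP (z.1 \in E)) => [/set_mem/E_sub xJ|_]; last by rewrite mul0r.
  case: (boolP (z.2 \in I)) => [/set_mem yI|_]; last by rewrite mul0r mulr0.
  rewrite !mul1r; apply: G_ge0 => //.
  by move: yI; rewrite /= in_itv /= => /andP[? ?]; apply/andP; split; exact: ltW.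
have upotE : (\int[mu]_(x in E) upot sigma x = \int[mu]_x \int[sigmaI]_y F (x, y))%E.
  rewrite integral_mkcond; apply: eq_integral => x _; rewrite /patch.
  case: ifPn => xE.
    rewrite /upot (eq_measure_integral sigmaI) // integral_mkcond.
    apply: eq_integral => y _; rewrite /patch /F /= !indicE xE mul1r.
    by case: ifPn => _; rewrite ?mul1r ?mul0r.
  by apply/esym/integral0_eq => y _; rewrite /F /= indicE (negbTE xE) mul0r.
rewrite upotE (fubini_tonelli F mF F0).
apply: (@le_trans _ _ (\int[sigmaI]_y ((tent_integral t * \1_I y)%R)%:E)%E).
  apply: ge0_le_integral => //.
  - by move=> y _; apply: integral_ge0.
  - exact: (measurable_fun_fubini_tonelli_G F mF F0).
  - apply/measurable_EFinP/measurable_funM; first exact: measurable_cst.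
    exact: measurable_indic.
  move=> y _; rewrite indicE; case: (boolP (y \in I)) => yI; last first.
    rewrite mulr0 integral0_eq // => x _.
    by rewrite /F /= !indicE (negbTE yI) mul0r mulr0.
  rewrite mulr1 [leLHS](_ : _ = \int[mu]_(x in E) (G x y)%:E)%E.
    by apply: integral_G_le_tent => //; move: yI; rewrite inE /= in_itv.
  rewrite [RHS]integral_mkcond; apply: eq_integral => x _.
  by rewrite /patch /F /= !indicE yI mul1r; case: ifPn => _; rewrite ?mul1r ?mul0r.
under eq_integral => y _ do rewrite EFinM.
rewrite ge0_integralZl_EFin //; last 2 first.
- exact/measurable_EFinP/measurable_indic.
- exact: tent_integral_ge0.
by rewrite integral_indic // setIT muleC -sigmaIE.
Qed.

End potential_integrals.

Section dirac_potential.
Context {R : realType}.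
Notation mu := (@lebesgue_measure R).
Local Notation I := (`](- pi)%R, (pi : R)[%classic : set (measurableTypeR R)).

Lemma lebesgue_measure_centered_itv (t : R) : 0 <= t ->
  mu `[- (t / 2), t / 2] = t%:E.
Proof.
move=> t0; rewrite lebesgue_measure_itv /= lte_fin.
case: ifPn => [_|]; first by rewrite -EFinD; congr EFin; lra.
by rewrite -leNgt => t_le0; have -> : t = 0 by lra.
Qed.

Lemma integral_G0_centered (t : R) : 0 <= t <= 2 * pi ->
  (\int[mu]_(x in `[(- (t / 2))%R, (t / 2)%R]) (G x 0)%:E = (tent_integral t)%:E)%E.
Proof.
move=> /andP[t0 t_le]; have pi0 := pi_gt0 R.
have t2_ge0 : 0 <= t / 2 by rewrite divr_ge0.
rewrite (@ge0_integral_itv_split _ _ 0); last 4 first.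
- by rewrite oppr_le0.
- exact: t2_ge0.
- apply/measurable_EFinP/(measurable_funS measurableT) => //; exact: measurable_G_left.
- move=> x /andP[x_ge x_le]; rewrite lee_fin; apply: G_ge0; apply/andP; split; lra.
rewrite (@integral_itv_trapezoid _ _ _ ((pi - 0) / (2 * pi)) ((pi - 0) / 2 - 0));
  last 2 first.
- by rewrite oppr_le0.
- by move=> x /andP[_ x_le]; rewrite -(subr0 (G x 0)) G_le_affine.
rewrite (@integral_itv_trapezoid _ _ _ (- (pi + 0) / (2 * pi)) ((pi + 0) / 2 - 0));
  last 2 first.
- exact: t2_ge0.
- by move=> x /andP[x_ge _]; rewrite -(subr0 (G x 0)) G_ge_affine.
rewrite -EFinD (@G_leE _ (- (t / 2)) 0) ?oppr_le0 // (@G_leE _ 0 0) //.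
rewrite (@G_geE _ (t / 2) 0) // /tent_integral; congr EFin.
move: (pi : R) pi0 => P P0; have ? : P != 0 by rewrite gt_eqF.
by field.
Qed.

Lemma upot_scaled_dirac (nu : {measure set (measurableTypeR R) -> \bar R}) (m x : R) :
  0 <= m -> (forall A, measurable A -> nu A = (m%:E * \d_(0%R : R) A)%E) ->
  - pi <= x <= pi -> upot nu x = (m * G x 0)%:E.
Proof.
move=> m0 nuE x_itv; have pi0 := pi_gt0 R.
have mG : measurable_fun I (fun y => (G x y)%:E).
  apply/measurable_EFinP/(measurable_funS measurableT) => //.
  by apply: measurable_fun_G; [exact: measurable_cst | exact: measurable_id].
pose m_dirac := mscale (NngNum m0) (@dirac _ (measurableTypeR R) 0%R R).
rewrite /upot (eq_measure_integral m_dirac); last first.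
  by move=> A mA _; rewrite nuE.
rewrite ge0_integral_mscale //; last first.
  move=> y; rewrite /= in_itv /= => /andP[y_gt y_lt]; rewrite lee_fin.
  by apply: G_ge0 => //; apply/andP; split; exact: ltW.
rewrite integral_dirac // diracE mem_set ?mul1e //=.
by rewrite in_itv /=; apply/andP; split; lra.
Qed.

Lemma integral_upot_scaled_dirac (nu : {measure set (measurableTypeR R) -> \bar R})
    (m t : R) :
  0 <= m -> (forall A, measurable A -> nu A = (m%:E * \d_(0%R : R) A)%E) ->
  0 <= t <= 2 * pi ->
  (\int[mu]_(x in `[(- (t / 2))%R, (t / 2)%R]) upot nu x = m%:E * (tent_integral t)%:E)%E.
Proof.
move=> m0 nuE t_itv; have pi0 := pi_gt0 R.
have x_itv x : `[(- (t / 2))%R, (t / 2)%R]%classic x -> - pi <= x <= pi.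
  move: t_itv => /andP[? ?]; rewrite /= in_itv /= => /andP[? ?].
  by apply/andP; split; lra.
transitivity (\int[mu]_(x in `[(- (t / 2))%R, (t / 2)%R]) (m%:E * (G x 0)%:E))%E.
  apply: eq_integral => x /set_mem/x_itv ?.
  by rewrite (upot_scaled_dirac m0 nuE) // EFinM.
rewrite ge0_integralZl_EFin ?integral_G0_centered //.
- move=> x /x_itv ?; rewrite lee_fin; apply: G_ge0 => //; apply/andP; split; lra.
- apply/measurable_EFinP/(measurable_funS measurableT) => //; exact: measurable_G_left.
Qed.

End dirac_potential.

Theorem lemma5p6 (R : realType)
  (sigma sigmash : {measure set (measurableTypeR R) -> \bar R}) :
  (* sigma is a finite Borel measure on (-pi,pi) *)
  sigma (~` `](- pi)%R, (pi : R)[%classic) = 0%E ->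
  (sigma `](- pi)%R, (pi : R)[%classic < +oo)%E ->
  singular_lebesgue sigma ->
  (* sigmash = sigma((-pi,pi)) * delta_0 *)
  (forall A : set (measurableTypeR R), measurable A ->
     sigmash A = (sigma `](- pi)%R, (pi : R)[%classic * \d_(0%R : R) A)%E) ->
  forall t : R, 0 <= t <= 2 * pi ->
    (star (upot sigma) t <= star (upot sigmash) t)%E.
Proof.
move=> _ sigmaI_fin _ sigmashE t t_itv.
set sigmaI := sigma _ in sigmaI_fin sigmashE *.
have sigmaIE : sigmaI = (fine sigmaI)%:E.
  by rewrite fineK // ge0_fin_numE // measure_ge0.
apply: (@le_trans _ _ (sigmaI * (tent_integral t)%:E)%E).
  apply: ge_ereal_sup => _ [E [mE E_sub muE] <-].
  exact: integral_upot_le_tent.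
apply: ereal_sup_ubound; exists `[(- (t / 2))%R, (t / 2)%R]%classic.
  have [t0 t_le] := andP t_itv; have pi0 := pi_gt0 R.
  split; [exact: measurable_itv | | exact: lebesgue_measure_centered_itv].
  by move=> x; rewrite /= !in_itv /= => /andP[? ?]; apply/andP; split; lra.
rewrite sigmaIE in sigmashE *.
apply: integral_upot_scaled_dirac => //; exact/fine_ge0/measure_ge0.
Qed.
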